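(* Let $E$ and $F$ be weighted geometric mean closed Archimedean vector lattices over $\mathbb{K}$, let $n\in\mathbb{N}$, and let $r_1,\dots,r_n\in(0,1)$ with $\sum_{k=1}^n r_k=1$. (1) For every positive linear map $T\colon E\to F$ and all $f_1,\dots,f_n\in E$: $T\bigl(\triangle_{k=1}^n(f_k,r_k)\bigr)\le\triangle_{k=1}^n\bigl(T(|f_k|),r_k\bigr)$. (2) A linear map $T\colon E\to F$ is a vector lattice homomorphism if and only if $T\bigl(\triangle_{k=1}^n(f_k,r_k)\bigr)=\triangle_{k=1}^n\bigl(T(f_k),r_k\bigr)$ for all $f_1,\dots,f_n\in E$. (3) If $G$ is a (not necessarily weighted geometric mean closed) vector sublattice of $E$, $T\colon G\to F$ is a vector lattice homomorphism, and $f_1,\dots,f_n\in G$ with $\triangle_{k=1}^n(f_k,r_k)\in G$, then $T\bigl(\triangle_{k=1}^n(f_k,r_k)\bigr)=\triangle_{k=1}^n\bigl(T(f_k),r_k\bigr)$.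
   Context: $\mathbb{K}$ denotes $\mathbb{R}$ or $\mathbb{C}$. An Archimedean real vector lattice $E$ is square mean closed if $\sup\{(\cos\theta)f+(\sin\theta)g:\theta\in[0,2\pi]\}$ exists in $E$ for all $f,g\in E$. An Archimedean vector lattice over $\mathbb{C}$ is a complex vector space $E+iE$ (complexification) where $E$ is a square mean closed Archimedean real vector lattice; its modulus is $|f+ig|=\sup\{(\cos\theta)f+(\sin\theta)g:\theta\in[0,2\pi]\}$. An Archimedean vector lattice over $\mathbb{R}$ is an Archimedean real vector lattice with $|f|=f\vee(-f)$. For such $E$: $E^{+}=\{f\in E:|f|=f\}$, $E_\rho=\{f-g:f,g\in E^+\}$, ordered as a real vector lattice; infima are in $E_\rho$. $E$ is weighted geometric mean closed if for every $n$, all $f_1,\dots,f_n\in E$ and all $r_1,\dots,r_n\in(0,1)$ with $\sum r_k=1$, the infimum $\triangle_{k=1}^n(f_k,r_k):=\inf\{\sum_{k=1}^n r_k\theta_k|f_k|:\theta_k\in(0,\infty),\ \prod_{k=1}^n\theta_k^{r_k}=1\}$ exists in $E$. A linear map $T$ is positive if $T(E^+)\subseteq F^+$; it is a vector lattice homomorphism if $|T(f)|=T(|f|)$ for all $f$. A vector sublattice of $E$ is a $\mathbb{K}$-linear subspace closed under the modulus. *)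

From Stdlib Require Import Reals Lra ClassicalEpsilon.
Open Scope R_scope.
Set Implicit Arguments.

Record RVL := {
  rv_car :> Type;
  rv_zero : rv_car;
  rv_add : rv_car -> rv_car -> rv_car;
  rv_opp : rv_car -> rv_car;
  rv_scal : R -> rv_car -> rv_car;
  rv_le : rv_car -> rv_car -> Prop;
  rv_join : rv_car -> rv_car -> rv_car;
  rv_addA : forall x y z, rv_add x (rv_add y z) = rv_add (rv_add x y) z;
  rv_addC : forall x y, rv_add x y = rv_add y x;
  rv_add0 : forall x, rv_add x rv_zero = x;
  rv_addN : forall x, rv_add x (rv_opp x) = rv_zero;
  rv_scal1 : forall x, rv_scal 1 x = x;
  rv_scalA : forall a b x, rv_scal a (rv_scal b x) = rv_scal (a * b) x;
  rv_scalDr : forall a x y, rv_scal a (rv_add x y) = rv_add (rv_scal a x) (rv_scal a y);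
  rv_scalDl : forall a b x, rv_scal (a + b) x = rv_add (rv_scal a x) (rv_scal b x);
  rv_le_refl : forall x, rv_le x x;
  rv_le_anti : forall x y, rv_le x y -> rv_le y x -> x = y;
  rv_le_trans : forall x y z, rv_le x y -> rv_le y z -> rv_le x z;
  rv_le_add : forall x y z, rv_le x y -> rv_le (rv_add x z) (rv_add y z);
  rv_le_scal : forall a x, 0 <= a -> rv_le rv_zero x -> rv_le rv_zero (rv_scal a x);
  rv_join_l : forall x y, rv_le x (rv_join x y);
  rv_join_r : forall x y, rv_le y (rv_join x y);
  rv_join_lub : forall x y z, rv_le x z -> rv_le y z -> rv_le (rv_join x y) z;
  rv_archi : forall x y, rv_le rv_zero x ->
     (forall n : nat, rv_le (rv_scal (INR n) x) y) -> x = rv_zero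
}.

Arguments rv_zero {r}.

Definition rv_is_sup (E : RVL) (S : E -> Prop) (s : E) : Prop :=
  (forall h, S h -> rv_le E h s) /\
  (forall u, (forall h, S h -> rv_le E h u) -> rv_le E s u).

Definition sm_set (E : RVL) (f g : E) : E -> Prop :=
  fun h => exists theta, 0 <= theta <= 2 * PI /\
     h = rv_add E (rv_scal E (cos theta) f) (rv_scal E (sin theta) g).

Definition square_mean_closed (E : RVL) : Prop :=
  forall f g : E, exists s, @rv_is_sup E (@sm_set E f g) s.

(** the square mean  sup{ cos(t) f + sin(t) g : t in [0,2pi] }  (chosen when it exists) *)
Definition sm_sup (E : RVL) (f g : E) : E :=
  epsilon (inhabits (@rv_zero E)) (fun s => @rv_is_sup E (@sm_set E f g) s).

Inductive Kfield := KR | KC.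

(** scalars: R, or C represented as pairs (re, im) *)
Definition Kscal (K : Kfield) : Type :=
  match K with KR => R | KC => (R * R)%type end.

(** the vector lattice over K built on E: E itself, or its complexification E + iE *)
Definition Vc (K : Kfield) (E : RVL) : Type :=
  match K with KR => rv_car E | KC => (rv_car E * rv_car E)%type end.

Definition KVL_ok (K : Kfield) (E : RVL) : Prop :=
  match K with KR => True | KC => square_mean_closed E end.

Definition vzero {K E} : Vc K E :=
  match K return Vc K E with
  | KR => @rv_zero E
  | KC => (@rv_zero E, @rv_zero E)
  end.

Definition vadd {K E} : Vc K E -> Vc K E -> Vc K E :=
  match K return Vc K E -> Vc K E -> Vc K E with
  | KR => fun x y => rv_add E x y
  | KC => fun x y => (rv_add E (fst x) (fst y), rv_add E (snd x) (snd y))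
  end.

Definition vopp {K E} : Vc K E -> Vc K E :=
  match K return Vc K E -> Vc K E with
  | KR => fun x => rv_opp E x
  | KC => fun x => (rv_opp E (fst x), rv_opp E (snd x))
  end.

Definition vsub {K E} (x y : Vc K E) : Vc K E := vadd x (vopp y).

(** multiplication by a scalar of K;  (a+ib)(f+ig) = (af - bg) + i(bf + ag) *)
Definition vscal {K E} : Kscal K -> Vc K E -> Vc K E :=
  match K return Kscal K -> Vc K E -> Vc K E with
  | KR => fun a x => rv_scal E a x
  | KC => fun c x =>
      (rv_add E (rv_scal E (fst c) (fst x)) (rv_opp E (rv_scal E (snd c) (snd x))),
       rv_add E (rv_scal E (snd c) (fst x)) (rv_scal E (fst c) (snd x)))
  end.

Definition vrscal {K E} : R -> Vc K E -> Vc K E :=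
  match K return R -> Vc K E -> Vc K E with
  | KR => fun a x => rv_scal E a x
  | KC => fun a x => (rv_scal E a (fst x), rv_scal E a (snd x))
  end.

Definition vabs {K E} : Vc K E -> Vc K E :=
  match K return Vc K E -> Vc K E with
  | KR => fun x => rv_join E x (rv_opp E x)
  | KC => fun x => (@sm_sup E (fst x) (snd x), @rv_zero E)
  end.

Definition vpos {K E} (f : Vc K E) : Prop := vabs f = f.

Definition in_rho {K E} (f : Vc K E) : Prop :=
  exists g h, vpos g /\ vpos h /\ f = vsub g h.

Definition vle {K E} (f g : Vc K E) : Prop := vpos (vsub g f).

Definition is_inf_rho {K E} (S : Vc K E -> Prop) (x : Vc K E) : Prop :=
  in_rho x /\ (forall s, S s -> vle x s) /\
  (forall y, in_rho y -> (forall s, S s -> vle y s) -> vle y x).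

Fixpoint sumR (n : nat) (g : nat -> R) : R :=
  match n with O => 0 | S m => sumR m g + g m end.
Fixpoint prodR (n : nat) (g : nat -> R) : R :=
  match n with O => 1 | S m => prodR m g * g m end.
Fixpoint sumV {K E} (n : nat) (g : nat -> Vc K E) : Vc K E :=
  match n with O => vzero | S m => vadd (sumV m g) (g m) end.

Definition wgm_set {K E} (n : nat) (f : nat -> Vc K E) (r : nat -> R) : Vc K E -> Prop :=
  fun s => exists theta : nat -> R,
    (forall k, (k < n)%nat -> 0 < theta k) /\
    prodR n (fun k => Rpower (theta k) (r k)) = 1 /\
    s = sumV n (fun k => vrscal (r k * theta k) (vabs (f k))).

Definition is_wgm {K E} (n : nat) (f : nat -> Vc K E) (r : nat -> R) (x : Vc K E) : Prop :=
  is_inf_rho (wgm_set n f r) x.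

Definition wgm_closed (K : Kfield) (E : RVL) : Prop :=
  forall (n : nat) (f : nat -> Vc K E) (r : nat -> R),
    (forall k, (k < n)%nat -> 0 < r k < 1) -> sumR n r = 1 ->
    exists x, is_wgm n f r x.

Definition Klinear {K E F} (T : Vc K E -> Vc K F) : Prop :=
  (forall x y, T (vadd x y) = vadd (T x) (T y)) /\
  (forall (c : Kscal K) x, T (vscal c x) = vscal c (T x)).

Definition positive_map {K E F} (T : Vc K E -> Vc K F) : Prop :=
  forall f, vpos f -> vpos (T f).

Definition vl_hom {K E F} (T : Vc K E -> Vc K F) : Prop :=
  forall f, vabs (T f) = T (vabs f).

Definition sublattice {K E} (G : Vc K E -> Prop) : Prop :=
  G vzero /\ (forall x y, G x -> G y -> G (vadd x y)) /\
  (forall (c : Kscal K) x, G x -> G (vscal c x)) /\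
  (forall x, G x -> G (vabs x)).

(** maps defined on a sublattice G (represented as total functions, only values on G matter) *)
Definition Klinear_on {K E F} (G : Vc K E -> Prop) (T : Vc K E -> Vc K F) : Prop :=
  (forall x y, G x -> G y -> T (vadd x y) = vadd (T x) (T y)) /\
  (forall (c : Kscal K) x, G x -> T (vscal c x) = vscal c (T x)).

Definition vl_hom_on {K E F} (G : Vc K E -> Prop) (T : Vc K E -> Vc K F) : Prop :=
  forall f, G f -> vabs (T f) = T (vabs f).

From Stdlib Require Import Reals Lra Lia List ClassicalEpsilon.
Import ListNotations.
Open Scope R_scope.

(* Each element [wgm_term f theta = sum_k r_k theta_k |f_k|] of the family defining
   [x = wgm(f_k, r_k)] is sent by a positive map (or a lattice homomorphism) [T] to the
   corresponding element of the family defining [y]; as [T] is monotone, [T x <= y].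
   For the converse inequality in (3), round the parameters [theta] up to a finite grid and
   renormalize: for every [eta > 0] there are finitely many admissible parameters whose terms
   have a minimum [m] with [m - eta w <= x], where [w = sum_k r_k |f_k|]. Finite minima lie in
   the sublattice and are preserved by [T], so [y <= T m <= T x + eta T w], and the
   Archimedean property gives [T x = y]. In (2) the converse direction uses the constant
   family [f_k = f], whose weighted geometric mean is [|f|] by the weighted AM-GM
   inequality. Over [C] all order statements concern real elements and reduce to [E]. *)

Section RealVectorSpace.
Variable E : RVL.
Local Notation "x +v y" := (rv_add E x y) (at level 50, left associativity).
Local Notation "-v x" := (rv_opp E x) (at level 35, right associativity).
Local Notation "c *v x" := (rv_scal E c x) (at level 40, left associativity).
Local Notation z := (@rv_zero E).

Lemma rv_add0l x : z +v x = x.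
Proof. rewrite rv_addC; apply rv_add0. Qed.

Lemma rv_addNl x : -v x +v x = z.
Proof. rewrite rv_addC; apply rv_addN. Qed.

Lemma rv_addIr w x y : x +v w = y +v w -> x = y.
Proof.
  intros H. rewrite <- (rv_add0 E x), <- (rv_add0 E y), <- (rv_addN E w), !rv_addA, H.
  reflexivity.
Qed.

Lemma rv_scal0l x : 0 *v x = z.
Proof.
  apply (rv_addIr (0 *v x)). rewrite <- rv_scalDl, Rplus_0_l, rv_add0l. reflexivity.
Qed.

Lemma rv_scal0r c : c *v z = z.
Proof.
  apply (rv_addIr (c *v z)). rewrite <- rv_scalDr, !rv_add0l. reflexivity.
Qed.

Lemma rv_oppE x : -v x = (-1) *v x.
Proof.
  apply (rv_addIr x). rewrite rv_addNl. pattern x at 2. rewrite <- (rv_scal1 E x).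
  rewrite <- rv_scalDl. replace (-1 + 1) with 0 by ring. rewrite rv_scal0l. reflexivity.
Qed.

Inductive lin_expr :=
  | LAtom (i : nat) | LZero | LAdd (a b : lin_expr) | LOpp (a : lin_expr)
  | LScal (c : R) (a : lin_expr).

Fixpoint lin_eval (env : list E) (e : lin_expr) : E :=
  match e with
  | LAtom i => nth i env z
  | LZero => z
  | LAdd a b => lin_eval env a +v lin_eval env b
  | LOpp a => -v lin_eval env a
  | LScal c a => c *v lin_eval env a
  end.

Fixpoint lin_coef (e : lin_expr) (j : nat) : R :=
  match e with
  | LAtom i => if Nat.eqb j i then 1 else 0
  | LZero => 0
  | LAdd a b => lin_coef a j + lin_coef b j
  | LOpp a => - lin_coef a j
  | LScal c a => c * lin_coef a j
  end.

Fixpoint lin_comb (env : list E) (c : nat -> R) : E :=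
  match env with
  | [] => z
  | a :: l => c O *v a +v lin_comb l (fun i => c (S i))
  end.

Lemma lin_comb_add env : forall c d,
  lin_comb env (fun i => c i + d i) = lin_comb env c +v lin_comb env d.
Proof.
  induction env as [|a l IH]; intros c d; simpl.
  - rewrite rv_add0l; reflexivity.
  - rewrite IH, rv_scalDl, !rv_addA. f_equal.
    rewrite <- !rv_addA. f_equal. apply rv_addC.
Qed.

Lemma lin_comb_scal env : forall a c, lin_comb env (fun i => a * c i) = a *v lin_comb env c.
Proof.
  induction env as [|b l IH]; intros a c; simpl.
  - rewrite rv_scal0r; reflexivity.
  - rewrite IH, rv_scalDr, rv_scalA; reflexivity.
Qed.

Lemma lin_comb_ext env : forall c d,
  (forall i, (i < length env)%nat -> c i = d i) -> lin_comb env c = lin_comb env d.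
Proof.
  induction env as [|a l IH]; intros c d H; simpl; auto.
  rewrite (H O) by (simpl; lia). f_equal. apply IH. intros i Hi; apply H; simpl; lia.
Qed.

Lemma lin_comb0 env : lin_comb env (fun _ => 0) = z.
Proof. induction env; simpl; auto. rewrite IHenv, rv_scal0l, rv_add0l; reflexivity. Qed.

Lemma lin_comb_delta env : forall i,
  lin_comb env (fun j => if Nat.eqb j i then 1 else 0) = nth i env z.
Proof.
  induction env as [|a l IH]; intros i; simpl.
  - destruct i; reflexivity.
  - destruct i as [|i]; simpl.
    + rewrite rv_scal1, lin_comb0, rv_add0; reflexivity.
    + rewrite rv_scal0l, rv_add0l, <- IH. apply lin_comb_ext. reflexivity.
Qed.

Lemma lin_eval_comb env e : lin_eval env e = lin_comb env (lin_coef e).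
Proof.
  induction e; simpl.
  - rewrite lin_comb_delta; reflexivity.
  - rewrite lin_comb0; reflexivity.
  - rewrite lin_comb_add, IHe1, IHe2; reflexivity.
  - rewrite rv_oppE, IHe, <- lin_comb_scal. apply lin_comb_ext; intros; ring.
  - rewrite IHe, lin_comb_scal; reflexivity.
Qed.

Lemma lin_eval_eq env e1 e2 :
  (forall i, (i < length env)%nat -> lin_coef e1 i = lin_coef e2 i) ->
  lin_eval env e1 = lin_eval env e2.
Proof. intros H. rewrite !lin_eval_comb. apply lin_comb_ext; auto. Qed.

End RealVectorSpace.

Ltac lin_index x l :=
  lazymatch l with
  | (x :: _) => constr:(O)
  | (_ :: ?l') => let n := lin_index x l' in constr:(S n)
  end.

Ltac lin_reify env t :=
  lazymatch t with
  | rv_add _ ?a ?b =>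
      let ra := lin_reify env a in let rb := lin_reify env b in constr:(LAdd ra rb)
  | rv_opp _ ?a => let ra := lin_reify env a in constr:(LOpp ra)
  | rv_scal _ ?c ?a => let ra := lin_reify env a in constr:(LScal c ra)
  | @rv_zero _ => constr:(LZero)
  | _ => let i := lin_index t env in constr:(LAtom i)
  end.

(* Linear identities over the atoms [env], by reflection: both sides are normalised to
   coefficient vectors, which [field] compares. *)
Ltac rv_linear env :=
  lazymatch goal with
  | |- @eq (rv_car ?E) ?l ?r =>
    let el := lin_reify env l in let er := lin_reify env r in
    change (@lin_eval E env el = @lin_eval E env er); apply lin_eval_eq;
    let i := fresh "i" in let Hi := fresh "Hi" in
    intros i Hi; simpl in Hi;
    repeat (first [exfalso; lia | destruct i as [|i]; [simpl; field; lra|]])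
  end.

(** * Archimedean real vector lattices *)

Section RealVectorLattice.
Variable E : RVL.
Local Notation "x +v y" := (rv_add E x y) (at level 50, left associativity).
Local Notation "-v x" := (rv_opp E x) (at level 35, right associativity).
Local Notation "c *v x" := (rv_scal E c x) (at level 40, left associativity).
Local Notation "x <=v y" := (rv_le E x y) (at level 70).
Local Notation z := (@rv_zero E).

Lemma rv_sub_eq0 x y : x +v -v y = z <-> y = x.
Proof.
  split; intros H.
  - replace y with (y +v z) by apply rv_add0. rewrite <- H. rv_linear [x; y].
  - subst; apply rv_addN.
Qed.

Lemma rv_le_subr x y : x <=v y <-> z <=v y +v -v x.
Proof.
  split; intros H.
  - rewrite <- (rv_addN E x). apply rv_le_add; auto.
  - rewrite <- (rv_add0l E x). replace y with ((y +v -v x) +v x) by rv_linear [x; y].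
    apply rv_le_add; auto.
Qed.

Lemma rv_le_of_sub d x y : z <=v d -> y +v -v x = d -> x <=v y.
Proof. intros Hd Hxy. apply rv_le_subr. rewrite Hxy. exact Hd. Qed.

Lemma rv_pos_add x y : z <=v x -> z <=v y -> z <=v x +v y.
Proof.
  intros Hx Hy. apply (rv_le_trans E _ y); auto. apply (rv_le_of_sub x); auto.
  rv_linear [x; y].
Qed.

Lemma rv_le_add2 a b c d : a <=v b -> c <=v d -> a +v c <=v b +v d.
Proof.
  intros H1 H2. apply rv_le_subr in H1. apply rv_le_subr in H2.
  apply (rv_le_of_sub ((b +v -v a) +v (d +v -v c))).
  - apply rv_pos_add; auto.
  - rv_linear [a; b; c; d].
Qed.

Lemma rv_le_scalr c x y : 0 <= c -> x <=v y -> c *v x <=v c *v y.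
Proof.
  intros Hc H. apply rv_le_subr in H. apply (rv_le_of_sub (c *v (y +v -v x))).
  - apply rv_le_scal; auto.
  - rv_linear [x; y].
Qed.

Lemma rv_le_scall c d x : c <= d -> z <=v x -> c *v x <=v d *v x.
Proof.
  intros Hcd Hx. apply (rv_le_of_sub ((d - c) *v x)).
  - apply rv_le_scal; auto; lra.
  - rv_linear [x].
Qed.

Lemma rv_pos_of_double x : z <=v x +v x -> z <=v x.
Proof.
  intros H. replace x with ((/2) *v (x +v x)) by rv_linear [x].
  apply rv_le_scal; auto; lra.
Qed.

Lemma rv_pos_of_le_opp u x : x <=v u -> -v x <=v u -> z <=v u.
Proof.
  intros H1 H2. apply rv_pos_of_double. apply (rv_le_trans E _ (x +v -v x)).
  - rewrite rv_addN. apply rv_le_refl.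
  - apply rv_le_add2; auto.
Qed.

Definition rv_abs (x : E) : E := rv_join E x (-v x).

Lemma rv_abs_ge0 x : z <=v rv_abs x.
Proof. apply (rv_pos_of_le_opp _ x); [apply rv_join_l | apply rv_join_r]. Qed.

Lemma rv_abs_id x : z <=v x -> rv_abs x = x.
Proof.
  intros H. apply rv_le_anti; [apply rv_join_lub | apply rv_join_l].
  - apply rv_le_refl.
  - apply (rv_le_trans E _ z); auto. apply (rv_le_of_sub x); auto. rv_linear [x].
Qed.

Lemma rv_scal_le_abs c x : -1 <= c <= 1 -> c *v x <=v rv_abs x.
Proof.
  intros Hc.
  assert (Habs : forall a, 0 <= a <= 1 -> a *v rv_abs x <=v rv_abs x).
  { intros a Ha. rewrite <- (rv_scal1 E (rv_abs x)) at 2.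
    apply rv_le_scall; [lra | apply rv_abs_ge0]. }
  destruct (Rle_dec 0 c).
  - apply (rv_le_trans E _ (c *v rv_abs x)).
    + apply rv_le_scalr; [lra | apply rv_join_l].
    + apply Habs; lra.
  - replace (c *v x) with ((-c) *v (-v x)) by rv_linear [x].
    apply (rv_le_trans E _ ((-c) *v rv_abs x)).
    + apply rv_le_scalr; [lra | apply rv_join_r].
    + apply Habs; lra.
Qed.

(* [x = x^+ - x^-] with [x^+- = (|x| +- x) / 2]. *)
Lemma rv_pos_decomp x : exists p q, z <=v p /\ z <=v q /\ x = p +v -v q.
Proof.
  exists ((/2) *v (rv_abs x +v x)), ((/2) *v (rv_abs x +v -v x)). split; [|split].
  - apply rv_le_scal; [lra|].
    apply (rv_le_of_sub (rv_abs x +v -v (-v x))); [apply (proj1 (rv_le_subr _ _)), rv_join_r|].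
    rv_linear [rv_abs x; x].
  - apply rv_le_scal; [lra|].
    apply (rv_le_of_sub (rv_abs x +v -v x)); [apply (proj1 (rv_le_subr _ _)), rv_join_l|].
    rv_linear [rv_abs x; x].
  - rv_linear [rv_abs x; x].
Qed.

(* The meet expressed through the modulus, which vector lattice homomorphisms preserve. *)
Definition rv_min (x y : E) : E := (/2) *v (x +v y +v -v rv_abs (x +v -v y)).

Lemma rv_min_le_l x y : rv_min x y <=v x.
Proof.
  apply (rv_le_of_sub ((/2) *v (rv_abs (x +v -v y) +v -v (-v (x +v -v y))))).
  - apply rv_le_scal; [lra|]. apply (proj1 (rv_le_subr _ _)), rv_join_r.
  - unfold rv_min. rv_linear [x; y; rv_abs (x +v -v y)].
Qed.

Lemma rv_min_le_r x y : rv_min x y <=v y.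
Proof.
  apply (rv_le_of_sub ((/2) *v (rv_abs (x +v -v y) +v -v (x +v -v y)))).
  - apply rv_le_scal; [lra|]. apply (proj1 (rv_le_subr _ _)), rv_join_l.
  - unfold rv_min. rv_linear [x; y; rv_abs (x +v -v y)].
Qed.

Lemma rv_min_glb w x y : w <=v x -> w <=v y -> w <=v rv_min x y.
Proof.
  intros H1 H2. apply rv_le_subr in H1. apply rv_le_subr in H2.
  assert (Ha : rv_abs (x +v -v y) <=v (x +v -v w) +v (y +v -v w)).
  { apply rv_join_lub.
    - apply (rv_le_of_sub ((y +v -v w) +v (y +v -v w))).
      + apply rv_pos_add; auto.
      + rv_linear [x; y; w].
    - apply (rv_le_of_sub ((x +v -v w) +v (x +v -v w))).
      + apply rv_pos_add; auto.
      + rv_linear [x; y; w]. }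
  apply rv_le_subr in Ha.
  apply (rv_le_of_sub ((/2) *v ((x +v -v w +v (y +v -v w)) +v -v rv_abs (x +v -v y)))).
  - apply rv_le_scal; auto; lra.
  - unfold rv_min. rv_linear [x; y; w; rv_abs (x +v -v y)].
Qed.

Lemma sm_set_0 f g : sm_set E f g f.
Proof.
  exists 0. split.
  - pose proof PI_RGT_0; lra.
  - rewrite cos_0, sin_0, rv_scal1, rv_scal0l, rv_add0. reflexivity.
Qed.

Lemma sm_set_PI f g : sm_set E f g (-v f).
Proof.
  exists PI. split.
  - pose proof PI_RGT_0; lra.
  - rewrite cos_PI, sin_PI, rv_scal0l, rv_add0, rv_oppE. reflexivity.
Qed.

Lemma sm_sup_spec f g : square_mean_closed E -> rv_is_sup E (sm_set E f g) (sm_sup E f g).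
Proof. intros H. unfold sm_sup. apply epsilon_spec, H. Qed.

Lemma sm_sup_ge0 f g : square_mean_closed E -> z <=v sm_sup E f g.
Proof.
  intros H. destruct (sm_sup_spec f g H) as [Hub _].
  apply (rv_pos_of_le_opp _ f); apply Hub; [apply sm_set_0 | apply sm_set_PI].
Qed.

(* No closedness is needed: here the supremum exists. *)
Lemma sm_sup_real f : sm_sup E f z = rv_abs f.
Proof.
  assert (Hsup : rv_is_sup E (sm_set E f z) (rv_abs f)).
  { split.
    - intros h [t [_ ->]]. rewrite rv_scal0r, rv_add0. apply rv_scal_le_abs, COS_bound.
    - intros u Hu. apply rv_join_lub; apply Hu; [apply sm_set_0 | apply sm_set_PI]. }
  assert (Hspec : rv_is_sup E (sm_set E f z) (sm_sup E f z)).
  { unfold sm_sup. apply epsilon_spec. eauto. }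
  destruct Hsup as [H1 H2], Hspec as [H3 H4]. apply rv_le_anti; auto.
Qed.

End RealVectorLattice.

(** * Real and imaginary parts *)

Definition re {K E} : Vc K E -> rv_car E :=
  match K return Vc K E -> rv_car E with KR => fun x => x | KC => fun x => fst x end.
Definition im {K E} : Vc K E -> rv_car E :=
  match K return Vc K E -> rv_car E with KR => fun _ => @rv_zero E | KC => fun x => snd x end.
Definition vreal {K E} : rv_car E -> Vc K E :=
  match K return rv_car E -> Vc K E with KR => fun x => x | KC => fun x => (x, @rv_zero E) end.
Definition kreal {K} : R -> Kscal K :=
  match K return R -> Kscal K with KR => fun c => c | KC => fun c => (c, 0) end.

Section ReIm.
Variable K : Kfield.
Variable E : RVL.
Local Notation V := (Vc K E).
Local Notation z := (@rv_zero E).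

Lemma v_ext (a b : V) : re a = re b -> im a = im b -> a = b.
Proof. destruct K; simpl; auto. destruct a, b; simpl; intros; subst; auto. Qed.

Lemma re_add (a b : V) : re (vadd a b) = rv_add E (re a) (re b).
Proof. destruct K; reflexivity. Qed.
Lemma im_add (a b : V) : im (vadd a b) = rv_add E (im a) (im b).
Proof. destruct K; simpl; auto. rewrite rv_add0; reflexivity. Qed.
Lemma re_opp (a : V) : re (vopp a) = rv_opp E (re a).
Proof. destruct K; reflexivity. Qed.
Lemma im_opp (a : V) : im (vopp a) = rv_opp E (im a).
Proof. destruct K; simpl; auto. rewrite <- (rv_add0 E (rv_opp E z)), rv_addNl; reflexivity. Qed.
Lemma re_sub (a b : V) : re (vsub a b) = rv_add E (re a) (rv_opp E (re b)).
Proof. destruct K; reflexivity. Qed.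
Lemma im_sub (a b : V) : im (vsub a b) = rv_add E (im a) (rv_opp E (im b)).
Proof. unfold vsub. rewrite im_add, im_opp; reflexivity. Qed.
Lemma re_rscal c (a : V) : re (vrscal c a) = rv_scal E c (re a).
Proof. destruct K; reflexivity. Qed.
Lemma im_rscal c (a : V) : im (vrscal c a) = rv_scal E c (im a).
Proof. destruct K; simpl; auto. rewrite rv_scal0r; reflexivity. Qed.
Lemma re_zero : re (@vzero K E) = z.
Proof. destruct K; reflexivity. Qed.
Lemma im_zero : im (@vzero K E) = z.
Proof. destruct K; reflexivity. Qed.
Lemma re_real x : re (@vreal K E x) = x.
Proof. destruct K; reflexivity. Qed.
Lemma im_real x : im (@vreal K E x) = z.
Proof. destruct K; reflexivity. Qed.

Lemma vscal_kreal c (a : V) : vscal (kreal c) a = vrscal c a.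
Proof.
  destruct K; simpl; auto. destruct a as [a1 a2]; simpl.
  rewrite !rv_scal0l, rv_add0l, (rv_oppE E z), rv_scal0r, rv_add0. reflexivity.
Qed.

Lemma vabs_real (a : V) : im a = z -> re (vabs a) = rv_abs E (re a) /\ im (vabs a) = z.
Proof.
  destruct K; simpl; auto. destruct a as [a1 a2]; simpl. intros ->.
  split; [apply sm_sup_real | reflexivity].
Qed.

Lemma vabs_ge0 (a : V) : KVL_ok K E -> im (vabs a) = z /\ rv_le E z (re (vabs a)).
Proof.
  destruct K; simpl; intros H; split; auto.
  - apply rv_abs_ge0.
  - apply sm_sup_ge0; auto.
Qed.

Lemma vpos_iff (a : V) : vpos a <-> im a = z /\ rv_le E z (re a).
Proof.
  unfold vpos. destruct K; simpl.
  - split.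
    + intros H; split; auto. rewrite <- H. apply rv_abs_ge0.
    + intros [_ H]. apply rv_abs_id; auto.
  - destruct a as [a1 a2]; simpl. split.
    + intros H. injection H; intros H2 H1. subst a2. rewrite sm_sup_real in H1.
      split; auto. rewrite <- H1. apply rv_abs_ge0.
    + intros [-> H]. rewrite sm_sup_real, rv_abs_id; auto.
Qed.

End ReIm.

Ltac vsimp := repeat (rewrite ?re_add, ?im_add, ?re_opp, ?im_opp, ?re_sub, ?im_sub,
  ?re_rscal, ?im_rscal, ?re_zero, ?im_zero, ?re_real, ?im_real).

Ltac map_re l := lazymatch l with
  | [?a] => constr:([re a]) | ?a :: ?l' => let r := map_re l' in constr:(re a :: r) end.
Ltac map_im l := lazymatch l with
  | [?a] => constr:([im a]) | ?a :: ?l' => let r := map_im l' in constr:(im a :: r) end.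
Ltac v_linear l :=
  apply v_ext; vsimp; [let l1 := map_re l in rv_linear l1 | let l2 := map_im l in rv_linear l2].

Section VcOrder.
Variable K : Kfield.
Variable E : RVL.
Local Notation V := (Vc K E).
Local Notation z := (@rv_zero E).

Lemma vle_iff (a b : V) : vle a b <-> im a = im b /\ rv_le E (re a) (re b).
Proof.
  unfold vle. rewrite vpos_iff. vsimp. rewrite rv_sub_eq0, <- rv_le_subr. reflexivity.
Qed.

Lemma in_rho_iff (a : V) : in_rho a <-> im a = z.
Proof.
  split.
  - intros [g [h [Hg [Hh ->]]]]. apply vpos_iff in Hg. apply vpos_iff in Hh.
    vsimp. destruct Hg as [-> _], Hh as [-> _]. rv_linear (@nil (rv_car E)).
  - intros H. destruct (rv_pos_decomp E (re a)) as [p [q [Hp [Hq Ha]]]].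
    exists (vreal p), (vreal q). rewrite !vpos_iff. vsimp. split; [auto|split; [auto|]].
    apply v_ext; vsimp; auto. rewrite H. rv_linear (@nil (rv_car E)).
Qed.

Lemma vpos_rho (a : V) : vpos a -> in_rho a.
Proof. rewrite vpos_iff, in_rho_iff. tauto. Qed.

Lemma vpos_vle (a : V) : vpos a <-> vle vzero a.
Proof. rewrite vpos_iff, vle_iff. vsimp. split; intros [H1 H2]; auto. Qed.

Lemma vle_refl (a : V) : vle a a.
Proof. apply vle_iff. split; auto. apply rv_le_refl. Qed.

Lemma vle_trans (a b c : V) : vle a b -> vle b c -> vle a c.
Proof.
  rewrite !vle_iff. intros [H1 H2] [H3 H4]. split; [congruence | eapply rv_le_trans; eauto].
Qed.

Lemma vle_add2 (a b c d : V) : vle a b -> vle c d -> vle (vadd a c) (vadd b d).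
Proof.
  rewrite !vle_iff. intros [H1 H2] [H3 H4]. vsimp. split; [congruence | apply rv_le_add2; auto].
Qed.

Lemma vle_add (a b c : V) : vle a b -> vle (vadd a c) (vadd b c).
Proof. intros H. apply vle_add2; [exact H | apply vle_refl]. Qed.

Lemma vle_rscalr c (a b : V) : 0 <= c -> vle a b -> vle (vrscal c a) (vrscal c b).
Proof.
  rewrite !vle_iff. intros Hc [H1 H2]. vsimp. split; [congruence | apply rv_le_scalr; auto].
Qed.

Lemma vle_rscall c d (a : V) : c <= d -> vpos a -> vle (vrscal c a) (vrscal d a).
Proof.
  rewrite vle_iff, vpos_iff. intros Hc [H1 H2]. vsimp. rewrite H1, !rv_scal0r.
  split; [reflexivity | apply rv_le_scall; auto].
Qed.

Lemma vpos_add (a b : V) : vpos a -> vpos b -> vpos (vadd a b).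
Proof.
  rewrite !vpos_iff. intros [H1 H2] [H3 H4]. vsimp. rewrite H1, H3.
  split; [apply rv_add0 | apply rv_pos_add; auto].
Qed.

Lemma vpos_rscal c (a : V) : 0 <= c -> vpos a -> vpos (vrscal c a).
Proof.
  rewrite !vpos_iff. intros Hc [H1 H2]. vsimp. rewrite H1.
  split; [apply rv_scal0r | apply rv_le_scal; auto].
Qed.

Lemma vpos_zero : vpos (@vzero K E).
Proof. apply vpos_iff. vsimp. split; [reflexivity | apply rv_le_refl]. Qed.

Lemma vpos_abs (a : V) : KVL_ok K E -> vpos (vabs a).
Proof. intros H. apply vpos_iff, vabs_ge0, H. Qed.

Lemma vrscal1 (a : V) : vrscal 1 a = a.
Proof. apply v_ext; vsimp; apply rv_scal1. Qed.

Lemma vopp_rscal (a : V) : vopp a = vrscal (-1) a.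
Proof. v_linear [a]. Qed.

Lemma vpos_archi (d c : V) : vpos d -> (forall m : nat, vle (vrscal (INR m) d) c) -> d = vzero.
Proof.
  rewrite vpos_iff. intros [Hd1 Hd2] H. apply v_ext; vsimp; auto.
  apply (rv_archi E _ (re c) Hd2). intros m.
  destruct (proj1 (vle_iff _ _) (H m)) as [_ Hm]. rewrite re_rscal in Hm. exact Hm.
Qed.

Lemma vle_eq_of_approx (a b u : V) :
  vle a b -> (forall eta, 0 < eta -> vle b (vadd a (vrscal eta u))) -> a = b.
Proof.
  intros Hab Happrox.
  assert (Hd : forall m : nat, vle (vrscal (INR m) (vsub b a)) u).
  { intros m. assert (Hm : 0 < INR m + 1) by (pose proof (pos_INR m); lra).
    pose proof (Happrox _ (Rinv_0_lt_compat _ Hm)) as Hb.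
    apply (vle_add _ _ (vopp a)), (vle_rscalr (INR m + 1)) in Hb; [|lra].
    replace u with (vrscal (INR m + 1) (vadd (vadd a (vrscal (/ (INR m + 1)) u)) (vopp a)))
      by v_linear [a; u].
    eapply vle_trans; [|exact Hb]. apply vle_rscall; [lra | exact Hab]. }
  apply vpos_archi in Hd; [|exact Hab].
  apply v_ext; [apply (f_equal re) in Hd | apply (f_equal im) in Hd];
    rewrite ?re_sub, ?im_sub, ?re_zero, ?im_zero in Hd; apply rv_sub_eq0; exact Hd.
Qed.

Definition vmin (a b : V) : V := vrscal (/2) (vsub (vadd a b) (vabs (vsub a b))).

Lemma vmin_real (a b : V) : im a = z -> im b = z ->
  re (vmin a b) = rv_min E (re a) (re b) /\ im (vmin a b) = z.
Proof.
  intros Ha Hb.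
  assert (Hd : im (vsub a b) = z) by (vsimp; rewrite Ha, Hb; rv_linear (@nil (rv_car E))).
  destruct (vabs_real _ _ _ Hd) as [H1 H2]. unfold vmin, rv_min. vsimp.
  rewrite H1, H2, Ha, Hb, re_sub. split; [reflexivity | rv_linear (@nil (rv_car E))].
Qed.

Lemma vmin_rho (a b : V) : in_rho a -> in_rho b -> in_rho (vmin a b).
Proof. rewrite !in_rho_iff. intros. apply vmin_real; auto. Qed.

Lemma vmin_le_l (a b : V) : in_rho a -> in_rho b -> vle (vmin a b) a.
Proof.
  rewrite !in_rho_iff. intros Ha Hb. destruct (vmin_real _ _ Ha Hb) as [H1 H2].
  apply vle_iff. rewrite H1, H2, Ha. split; [reflexivity | apply rv_min_le_l].
Qed.

Lemma vmin_le_r (a b : V) : in_rho a -> in_rho b -> vle (vmin a b) b.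
Proof.
  rewrite !in_rho_iff. intros Ha Hb. destruct (vmin_real _ _ Ha Hb) as [H1 H2].
  apply vle_iff. rewrite H1, H2, Hb. split; [reflexivity | apply rv_min_le_r].
Qed.

Lemma vmin_glb (w a b : V) : in_rho a -> in_rho b -> vle w a -> vle w b -> vle w (vmin a b).
Proof.
  rewrite !in_rho_iff, !vle_iff. intros Ha Hb [H3 H4] [H5 H6].
  destruct (vmin_real _ _ Ha Hb) as [H1 H2]. rewrite H1, H2.
  split; [congruence | apply rv_min_glb; auto].
Qed.

Definition vmin_list (a0 : V) (l : list V) : V := fold_right vmin a0 l.

Lemma vmin_list_rho a0 l :
  in_rho a0 -> (forall x, In x l -> in_rho x) -> in_rho (vmin_list a0 l).
Proof. induction l; simpl; intros H0 H; auto. apply vmin_rho; auto. Qed.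

Lemma vmin_list_le a0 l x :
  in_rho a0 -> (forall x, In x l -> in_rho x) -> In x l -> vle (vmin_list a0 l) x.
Proof.
  induction l as [|a l IH]; simpl; intros H0 H Hx; [destruct Hx|].
  destruct Hx as [<-|Hx].
  - apply vmin_le_l; auto. apply vmin_list_rho; auto.
  - eapply vle_trans; [apply vmin_le_r | apply IH]; auto. apply vmin_list_rho; auto.
Qed.

Lemma vmin_list_glb a0 l w : in_rho a0 -> (forall x, In x l -> in_rho x) ->
  vle w a0 -> (forall x, In x l -> vle w x) -> vle w (vmin_list a0 l).
Proof.
  induction l; simpl; intros H0 H Hw0 Hw; auto. apply vmin_glb; auto. apply vmin_list_rho; auto.
Qed.

Lemma sumV_ext n (g h : nat -> V) :
  (forall k, (k < n)%nat -> g k = h k) -> sumV n g = sumV n h.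
Proof. induction n; intros H; simpl; auto. rewrite IHn, H; auto. Qed.

Lemma sumV_le n (g h : nat -> V) :
  (forall k, (k < n)%nat -> vle (g k) (h k)) -> vle (sumV n g) (sumV n h).
Proof. induction n; intros H; simpl; [apply vle_refl | apply vle_add2; auto]. Qed.

Lemma sumV_pos n (g : nat -> V) : (forall k, (k < n)%nat -> vpos (g k)) -> vpos (sumV n g).
Proof. induction n; intros H; simpl; [apply vpos_zero | apply vpos_add; auto]. Qed.

Lemma sumV_add n (g h : nat -> V) :
  sumV n (fun k => vadd (g k) (h k)) = vadd (sumV n g) (sumV n h).
Proof.
  induction n; simpl.
  - apply v_ext; vsimp; rv_linear (@nil (rv_car E)).
  - rewrite IHn. v_linear [sumV n g; sumV n h; g n; h n].
Qed.

Lemma sumV_rscal n c (g : nat -> V) : sumV n (fun k => vrscal c (g k)) = vrscal c (sumV n g).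
Proof.
  induction n; simpl.
  - apply v_ext; vsimp; rewrite rv_scal0r; reflexivity.
  - rewrite IHn. v_linear [sumV n g; g n].
Qed.

Lemma sumV_rscall n (c : nat -> R) (a : V) :
  sumV n (fun k => vrscal (c k) a) = vrscal (sumR n c) a.
Proof.
  induction n; simpl.
  - apply v_ext; vsimp; rewrite rv_scal0l; reflexivity.
  - rewrite IHn. v_linear [a].
Qed.

End VcOrder.

(** * A finite net of admissible parameters *)

Lemma sumR_ext n g h : (forall k, (k < n)%nat -> g k = h k) -> sumR n g = sumR n h.
Proof. induction n; intros H; simpl; auto. rewrite IHn, H; auto. Qed.

Lemma sumR_add n g h : sumR n (fun k => g k + h k) = sumR n g + sumR n h.
Proof. induction n; simpl; [lra | rewrite IHn; ring]. Qed.

Lemma sumR_scal n c g : sumR n (fun k => c * g k) = c * sumR n g.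
Proof. induction n; simpl; [ring | rewrite IHn; ring]. Qed.

Lemma sumR_le n g h : (forall k, (k < n)%nat -> g k <= h k) -> sumR n g <= sumR n h.
Proof. induction n; intros H; simpl; [lra | apply Rplus_le_compat; auto]. Qed.

Lemma sumR_ge_term n g j :
  (forall k, (k < n)%nat -> 0 <= g k) -> (j < n)%nat -> g j <= sumR n g.
Proof.
  induction n; intros H Hj; [lia|]. simpl.
  assert (H0 : 0 <= sumR n g).
  { replace 0 with (sumR n (fun _ => 0)) by (clear; induction n; simpl; lra).
    apply sumR_le. intros k Hk; apply H; lia. }
  destruct (Nat.eq_dec j n) as [->|Hjn]; [lra|].
  assert (g j <= sumR n g) by (apply IHn; [intros k Hk; apply H|]; lia).
  specialize (H n ltac:(lia)). lra.
Qed.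

Definition log_wmean n (r th : nat -> R) : R := sumR n (fun k => r k * ln (th k)).

Lemma prodR_Rpower n r th : prodR n (fun k => Rpower (th k) (r k)) = exp (log_wmean n r th).
Proof.
  unfold log_wmean, Rpower. induction n; simpl.
  - rewrite exp_0; reflexivity.
  - rewrite IHn, exp_plus; reflexivity.
Qed.

Definition admissible n r (th : nat -> R) : Prop :=
  (forall k, (k < n)%nat -> 0 < th k) /\ prodR n (fun k => Rpower (th k) (r k)) = 1.

Lemma admissible_log n r th : admissible n r th -> log_wmean n r th = 0.
Proof.
  intros [_ H]. rewrite prodR_Rpower, <- exp_0 in H. apply exp_inv, H.
Qed.

Lemma admissible_one n r : admissible n r (fun _ => 1).
Proof.
  split; [intros; lra|].
  assert (Hlog : log_wmean n r (fun _ => 1) = 0).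
  { unfold log_wmean. induction n; simpl; [reflexivity | rewrite IHn, ln_1; ring]. }
  rewrite prodR_Rpower, Hlog. apply exp_0.
Qed.

(* Weighted AM-GM, from [1 + ln t <= t]. *)
Lemma admissible_wmean_ge1 n r th : (forall k, (k < n)%nat -> 0 < r k) -> sumR n r = 1 ->
  admissible n r th -> 1 <= sumR n (fun k => r k * th k).
Proof.
  intros Hr Hs Hth. pose proof (admissible_log _ _ _ Hth) as Hlog. destruct Hth as [Hpos _].
  apply (Rle_trans _ (sumR n (fun k => r k * 1 + r k * ln (th k)))).
  - rewrite sumR_add. fold (log_wmean n r th). rewrite Hlog, (sumR_ext n _ r); [lra|].
    intros; ring.
  - apply sumR_le. intros k Hk. rewrite <- Rmult_plus_distr_l.
    apply Rmult_le_compat_l; [left; auto|].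
    rewrite <- (exp_ln (th k)) at 2 by auto. apply exp_ineq1_le.
Qed.

Definition normalize n r (g : nat -> R) : nat -> R := fun k => g k / exp (log_wmean n r g).

Lemma normalize_admissible n r g : sumR n r = 1 -> (forall k, (k < n)%nat -> 0 < g k) ->
  admissible n r (normalize n r g).
Proof.
  intros Hs Hg. split.
  - intros k Hk. unfold normalize. apply Rdiv_lt_0_compat; [auto | apply exp_pos].
  - rewrite prodR_Rpower, <- exp_0. f_equal. unfold log_wmean, normalize.
    rewrite (sumR_ext n _ (fun k => r k * ln (g k) + (- log_wmean n r g) * r k)).
    + rewrite sumR_add, sumR_scal, Hs. fold (log_wmean n r g). ring.
    + intros k Hk. unfold Rdiv. rewrite ln_mult, ln_Rinv, ln_exp; [ring | | |].
      all: auto using exp_pos, Rinv_0_lt_compat.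
Qed.

Lemma normalize_le n r g k : 0 <= log_wmean n r g -> 0 < g k -> normalize n r g k <= g k.
Proof.
  intros Hlog Hg. unfold normalize, Rdiv.
  assert (1 <= exp (log_wmean n r g)).
  { rewrite <- exp_0. destruct Hlog as [Hlt|<-]; [left; apply exp_increasing, Hlt | lra]. }
  rewrite <- (Rmult_1_r (g k)) at 2. apply Rmult_le_compat_l; [lra|].
  rewrite <- Rinv_1. apply Rinv_le_contravar; lra.
Qed.

(* All [g] with [g k] in [{eta, 2 eta, ..., N eta}] for [k < m] and [g k = eta] for [k >= m]. *)
Fixpoint grid (N : nat) (eta : R) (m : nat) : list (nat -> R) :=
  match m with
  | O => [fun _ => eta]
  | S m' => flat_map (fun g =>
      map (fun a k => if Nat.eq_dec k m' then INR a * eta else g k) (seq 1 N)) (grid N eta m')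
  end.

Lemma grid_pos N eta m g : 0 < eta -> In g (grid N eta m) -> forall k, 0 < g k.
Proof.
  revert g; induction m; simpl; intros g Heta Hg k.
  - destruct Hg as [<-|[]]; exact Heta.
  - apply in_flat_map in Hg. destruct Hg as [g0 [Hg0 Hg]]. apply in_map_iff in Hg.
    destruct Hg as [a [<- Ha]]. apply in_seq in Ha. destruct (Nat.eq_dec k m).
    + apply Rmult_lt_0_compat; auto. apply lt_0_INR; lia.
    + eapply IHm; eauto.
Qed.

Lemma grid_complete N eta m (P : nat -> R -> Prop) :
  (forall k, (k < m)%nat -> exists a, (1 <= a <= N)%nat /\ P k (INR a * eta)) ->
  exists g, In g (grid N eta m) /\ forall k, (k < m)%nat -> P k (g k).
Proof.
  induction m; intros H.
  - exists (fun _ => eta). split; [simpl; auto | intros; lia].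
  - destruct IHm as [g0 [Hg0 HP0]]; [intros k Hk; apply H; lia|].
    destruct (H m) as [a [Ha HPa]]; [lia|].
    exists (fun k => if Nat.eq_dec k m then INR a * eta else g0 k). split.
    + simpl. apply in_flat_map. exists g0. split; auto. apply in_map_iff.
      exists a. split; [reflexivity | apply in_seq; lia].
    + intros k Hk. destruct (Nat.eq_dec k m) as [->|]; auto. apply HP0; lia.
Qed.

Lemma grid_ceil eta N t : 0 < eta -> 0 < t -> t <= INR N * eta ->
  exists a, (1 <= a <= N)%nat /\ t <= INR a * eta <= t + eta.
Proof.
  intros Heta Ht. induction N; intros HN.
  - simpl in HN. lra.
  - destruct (Rle_dec t (INR N * eta)).
    + destruct IHN as [a [Ha Hb]]; auto. exists a; split; auto; lia.
    + exists (S N). split; [lia|]. rewrite S_INR, Rmult_plus_distr_r, Rmult_1_l in *. lra.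
Qed.

Lemma ln_le_mono x y : 0 < x -> x <= y -> ln x <= ln y.
Proof.
  intros Hx Hxy. destruct (Req_dec x y) as [->|]; [lra|]. left; apply ln_increasing; lra.
Qed.

Lemma exists_grid_size n (r : nat -> R) eta : (forall k, (k < n)%nat -> 0 < r k) -> 0 < eta ->
  exists N : nat, (1 <= N)%nat /\ forall j, (j < n)%nat -> 0 <= ln eta + r j * ln (INR N).
Proof.
  intros Hr Heta. set (M := sumR n (fun j => Rabs (ln eta) / r j)).
  destruct (INR_unbounded (exp M + 1)) as [N HN].
  assert (HN1 : (1 <= N)%nat).
  { destruct N; [simpl in HN; pose proof (exp_pos M); lra | lia]. }
  exists N. split; auto. intros j Hj. pose proof (Hr j Hj) as Hrj.
  assert (HM : Rabs (ln eta) / r j <= M).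
  { apply (sumR_ge_term n (fun j => Rabs (ln eta) / r j)); auto.
    intros k Hk. apply Rle_mult_inv_pos; [apply Rabs_pos | auto]. }
  assert (HlnN : M <= ln (INR N)).
  { rewrite <- (ln_exp M) at 1. apply ln_le_mono; [apply exp_pos | lra]. }
  assert (Rabs (ln eta) <= r j * ln (INR N)).
  { apply (Rmult_le_compat_l (r j)) in HM; [|lra]. unfold Rdiv in HM.
    rewrite Rmult_comm, Rmult_assoc, Rinv_l, Rmult_1_r in HM; [|lra].
    apply (Rmult_le_compat_l (r j)) in HlnN; lra. }
  pose proof (Rle_abs (- ln eta)). rewrite Rabs_Ropp in *. lra.
Qed.

(* In fact [log_wmean n r g >= ln eta + r j * ln N]. *)
Lemma log_wmean_ge0_of_large n r eta N g j : sumR n r = 1 ->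
  (forall k, (k < n)%nat -> 0 < r k) -> 0 < eta -> (forall k, (k < n)%nat -> eta <= g k) ->
  (1 <= N)%nat -> (j < n)%nat -> INR N * eta <= g j -> 0 <= ln eta + r j * ln (INR N) ->
  0 <= log_wmean n r g.
Proof.
  intros Hs Hr Heta Hg HN1 Hj Hgj HN.
  assert (HN0 : 0 < INR N) by (apply lt_0_INR; lia).
  assert (Hsplit : log_wmean n r g = ln eta + sumR n (fun k => r k * (ln (g k) - ln eta))).
  { unfold log_wmean. replace (ln eta) with (ln eta * sumR n r) at 1 by (rewrite Hs; ring).
    rewrite <- sumR_scal, <- sumR_add. apply sumR_ext. intros k Hk. ring. }
  assert (Hterm : r j * ln (INR N) <= r j * (ln (g j) - ln eta)).
  { apply Rmult_le_compat_l; [left; auto|].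
    pose proof (ln_le_mono _ _ (Rmult_lt_0_compat _ _ HN0 Heta) Hgj) as Hln.
    rewrite ln_mult in Hln; lra. }
  assert (Hsum : r j * (ln (g j) - ln eta) <= sumR n (fun k => r k * (ln (g k) - ln eta))).
  { apply (sumR_ge_term n (fun k => r k * (ln (g k) - ln eta))); auto.
    intros k Hk. apply Rmult_le_pos; [left; auto|].
    pose proof (ln_le_mono _ _ Heta (Hg k Hk)); lra. }
  lra.
Qed.

(* Round [min (theta k) (N eta)] up to the grid; [N] is so large that the resulting grid
   point has nonnegative [log_wmean], hence renormalizing it only decreases it. *)
Lemma admissible_net n r eta : (forall k, (k < n)%nat -> 0 < r k) -> sumR n r = 1 -> 0 < eta ->
  exists L : list (nat -> R), (forall g, In g L -> admissible n r g) /\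
    forall th, admissible n r th ->
      exists g, In g L /\ forall k, (k < n)%nat -> g k <= th k + eta.
Proof.
  intros Hr Hs Heta. destruct (exists_grid_size n r eta Hr Heta) as [N [HN1 HN]].
  assert (HNeta : 0 < INR N * eta) by (apply Rmult_lt_0_compat; [apply lt_0_INR; lia | lra]).
  exists (map (normalize n r) (grid N eta n)). split.
  - intros g Hg. apply in_map_iff in Hg. destruct Hg as [g0 [<- Hg0]].
    apply normalize_admissible; auto. intros k _. apply (grid_pos N eta n); auto.
  - intros th Hth. pose proof (admissible_log _ _ _ Hth) as Hlog0. destruct Hth as [Hpos _].
    destruct (grid_complete N eta n
      (fun k t => eta <= t /\ Rmin (th k) (INR N * eta) <= t <= th k + eta)) as [g0 [Hg0 HP]].
    { intros k Hk. pose proof (Hpos k Hk).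
      destruct (grid_ceil eta N (Rmin (th k) (INR N * eta))) as [a [Ha Hb]]; auto.
      - apply Rmin_glb_lt; lra.
      - apply Rmin_r.
      - exists a. split; auto. pose proof (Rmin_l (th k) (INR N * eta)).
        assert (1 <= INR a) by (apply (le_INR 1); lia). nra. }
    assert (Hlog : 0 <= log_wmean n r g0).
    { destruct (classic (exists j, (j < n)%nat /\ INR N * eta < th j))
        as [[j [Hj Hbig]]|Hsmall].
      - apply (log_wmean_ge0_of_large n r eta N g0 j); auto.
        + intros k Hk. apply HP, Hk.
        + destruct (HP j Hj) as [_ [Hmin _]]. rewrite Rmin_right in Hmin; lra.
      - rewrite <- Hlog0. apply sumR_le. intros k Hk. apply Rmult_le_compat_l; [left; auto|].
        destruct (HP k Hk) as [_ [Hmin _]]. apply ln_le_mono; auto.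
        rewrite Rmin_left in Hmin; auto.
        destruct (Rle_dec (th k) (INR N * eta)); auto. exfalso. apply Hsmall.
        exists k. split; auto; lra. }
    exists (normalize n r g0). split; [apply in_map, Hg0|]. intros k Hk.
    destruct (HP k Hk) as [Hge [_ Hle]].
    eapply Rle_trans; [apply normalize_le|]; auto; lra.
Qed.

(** * Sublattices and lattice homomorphisms *)

Section Sublattice.
Context {K : Kfield} {E : RVL} {G : Vc K E -> Prop}.
Hypothesis HG : sublattice G.

Lemma sublattice_rscal c x : G x -> G (vrscal c x).
Proof. intros H. rewrite <- vscal_kreal. apply HG, H. Qed.

Lemma sublattice_sub x y : G x -> G y -> G (vsub x y).
Proof.
  intros Hx Hy. apply HG; auto. rewrite vopp_rscal. apply sublattice_rscal, Hy.
Qed.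

Lemma sublattice_sumV n g : (forall k, (k < n)%nat -> G (g k)) -> G (sumV n g).
Proof. induction n; simpl; intros H; [apply HG | apply HG; auto]. Qed.

Lemma sublattice_vmin a b : G a -> G b -> G (vmin K E a b).
Proof.
  intros Ha Hb. apply sublattice_rscal, sublattice_sub; [apply HG; auto|].
  apply HG, sublattice_sub; auto.
Qed.

Lemma sublattice_vmin_list a0 l : G a0 -> (forall x, In x l -> G x) -> G (vmin_list K E a0 l).
Proof. induction l; simpl; intros; auto. apply sublattice_vmin; auto. Qed.

Context {F : RVL} {T : Vc K E -> Vc K F}.
Hypothesis HT : Klinear_on G T.

Lemma Klinear_on_rscal c x : G x -> T (vrscal c x) = vrscal c (T x).
Proof. intros H. rewrite <- !vscal_kreal. apply HT, H. Qed.

Lemma Klinear_on_sub x y : G x -> G y -> T (vsub x y) = vsub (T x) (T y).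
Proof.
  intros Hx Hy. unfold vsub. rewrite !vopp_rscal, (proj1 HT), Klinear_on_rscal; auto.
  apply sublattice_rscal, Hy.
Qed.

Lemma Klinear_on_sumV n g : (forall k, (k < n)%nat -> G (g k)) ->
  T (sumV n g) = sumV n (fun k => T (g k)).
Proof.
  induction n; simpl; intros H.
  - replace (@vzero K E) with (vrscal 0 (@vzero K E)) by (apply v_ext; vsimp; apply rv_scal0l).
    rewrite Klinear_on_rscal by apply HG. apply v_ext; vsimp; apply rv_scal0l.
  - rewrite (proj1 HT), IHn; auto. apply sublattice_sumV; auto.
Qed.

Hypothesis HH : vl_hom_on G T.

Lemma vl_hom_on_vmin a b : G a -> G b -> T (vmin K E a b) = vmin K F (T a) (T b).
Proof.
  intros Ha Hb. assert (Hab : G (vsub a b)) by (apply sublattice_sub; auto).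
  assert (Hsum : G (vadd a b)) by (apply HG; auto).
  assert (Habs : G (vabs (vsub a b))) by (apply HG; auto).
  unfold vmin. rewrite Klinear_on_rscal, Klinear_on_sub, <- HH, (proj1 HT), Klinear_on_sub;
    auto. apply sublattice_sub; auto.
Qed.

Lemma vl_hom_on_vmin_list a0 l : G a0 -> (forall x, In x l -> G x) ->
  T (vmin_list K E a0 l) = vmin_list K F (T a0) (map T l).
Proof.
  induction l; simpl; intros; auto. rewrite vl_hom_on_vmin, IHl; auto.
  apply sublattice_vmin_list; auto.
Qed.

Lemma vl_hom_on_mono a b : G a -> G b -> vle a b -> vle (T a) (T b).
Proof.
  unfold vle, vpos. intros Ha Hb H. rewrite <- Klinear_on_sub, HH, H; auto.
  apply sublattice_sub; auto.
Qed.

End Sublattice.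

Lemma Klinear_on_full {K E F} {T : Vc K E -> Vc K F} : Klinear T -> Klinear_on (fun _ => True) T.
Proof. intros [Hadd Hscal]. split; auto. Qed.

Lemma sublattice_full {K E} : sublattice (fun _ : Vc K E => True).
Proof. repeat split. Qed.

(** * Weighted geometric means *)

Section WeightedGeometricMean.
Variable K : Kfield.
Variable n : nat.
Variable r : nat -> R.
Hypothesis Hr : forall k, (k < n)%nat -> 0 < r k.
Hypothesis Hs : sumR n r = 1.

Definition wgm_term {D : RVL} (f : nat -> Vc K D) (th : nat -> R) : Vc K D :=
  sumV n (fun k => vrscal (r k * th k) (vabs (f k))).

Definition wgm_weight {D : RVL} (f : nat -> Vc K D) : Vc K D := wgm_term f (fun _ => 1).

Definition wgm_term_min {D : RVL} (f : nat -> Vc K D) (L : list (nat -> R)) : Vc K D :=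
  vmin_list K D (wgm_weight f) (map (wgm_term f) L).

Section Space.
Context {D : RVL}.
Hypothesis HD : KVL_ok K D.
Implicit Types (f : nat -> Vc K D) (x u : Vc K D).

Lemma wgm_set_iff f s : wgm_set n f r s <-> exists th, admissible n r th /\ s = wgm_term f th.
Proof.
  split.
  - intros [th [H1 [H2 H3]]]. exists th. repeat split; auto.
  - intros [th [[H1 H2] H3]]. exists th. auto.
Qed.

Lemma is_wgm_le f x th : is_wgm n f r x -> admissible n r th -> vle x (wgm_term f th).
Proof. intros [_ [Hlb _]] Hth. apply Hlb, wgm_set_iff. eauto. Qed.

Lemma is_wgm_ge f x u : is_wgm n f r x -> in_rho u ->
  (forall th, admissible n r th -> vle u (wgm_term f th)) -> vle u x.
Proof.
  intros [_ [_ Hglb]] Hu H. apply Hglb; auto.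
  intros s Hs'. apply wgm_set_iff in Hs'. destruct Hs' as [th [Hth ->]]. auto.
Qed.

Lemma wgm_term_pos f th : (forall k, (k < n)%nat -> 0 <= th k) -> vpos (wgm_term f th).
Proof.
  intros H. apply sumV_pos. intros k Hk. apply vpos_rscal; [|apply vpos_abs, HD].
  apply Rmult_le_pos; [left; apply Hr|]; auto.
Qed.

Lemma wgm_term_rho f th : admissible n r th -> in_rho (wgm_term f th).
Proof.
  intros [Hth _]. apply vpos_rho, wgm_term_pos. intros k Hk. left; auto.
Qed.

Lemma is_wgm_pos f x : is_wgm n f r x -> vpos x.
Proof.
  intros Hx. apply vpos_vle, (is_wgm_ge f); auto.
  - apply vpos_rho, vpos_zero.
  - intros th [Hth _]. apply (proj1 (vpos_vle _ _ _)), wgm_term_pos. intros k Hk. left; auto.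
Qed.

Lemma wgm_term_shift f th th' eta : (forall k, (k < n)%nat -> th' k <= th k + eta) ->
  vle (wgm_term f th') (vadd (wgm_term f th) (vrscal eta (wgm_weight f))).
Proof.
  intros H. replace (vadd (wgm_term f th) (vrscal eta (wgm_weight f)))
    with (wgm_term f (fun k => th k + eta)).
  - apply sumV_le. intros k Hk. apply vle_rscall; [|apply vpos_abs, HD].
    apply Rmult_le_compat_l; [left; apply Hr|]; auto.
  - unfold wgm_weight, wgm_term. rewrite <- sumV_rscal, <- sumV_add.
    apply sumV_ext. intros k Hk. v_linear [vabs (f k)].
Qed.

Lemma wgm_term_min_rho f L : (forall th, In th L -> admissible n r th) ->
  in_rho (wgm_term_min f L).
Proof.
  intros HL. apply vmin_list_rho; [apply wgm_term_rho, admissible_one|].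
  intros w Hw. apply in_map_iff in Hw. destruct Hw as [th [<- Hth]]. apply wgm_term_rho; auto.
Qed.

Lemma is_wgm_le_term_min f x L : is_wgm n f r x -> (forall th, In th L -> admissible n r th) ->
  vle x (wgm_term_min f L).
Proof.
  intros Hx HL. assert (Hx_rho : in_rho x) by apply Hx.
  assert (Hterms : forall w, In w (map (wgm_term f) L) -> in_rho w /\ vle x w).
  { intros w Hw. apply in_map_iff in Hw. destruct Hw as [th [<- Hth]].
    split; [apply wgm_term_rho | apply (is_wgm_le f)]; auto. }
  apply vmin_list_glb.
  - apply wgm_term_rho, admissible_one.
  - intros w Hw. apply Hterms, Hw.
  - apply (is_wgm_le f); auto. apply admissible_one.
  - intros w Hw. apply Hterms, Hw.
Qed.

Lemma is_wgm_approx f x eta : is_wgm n f r x -> 0 < eta ->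
  exists L, (forall th, In th L -> admissible n r th) /\
    vle (vsub (wgm_term_min f L) (vrscal eta (wgm_weight f))) x.
Proof.
  intros Hx Heta. destruct (admissible_net n r eta Hr Hs Heta) as [L [HL Hnet]].
  exists L. split; auto. apply (is_wgm_ge f); auto.
  - apply in_rho_iff. unfold vsub. rewrite im_add, im_opp, im_rscal.
    rewrite (proj1 (in_rho_iff _ _ _) (wgm_term_min_rho f L HL)).
    rewrite (proj1 (in_rho_iff _ _ (wgm_weight f)) (wgm_term_rho f _ (admissible_one n r))).
    rewrite rv_scal0r. apply rv_addN.
  - intros th Hth. destruct (Hnet th Hth) as [g [Hg Hgth]].
    assert (Hmin : vle (wgm_term_min f L) (vadd (wgm_term f th) (vrscal eta (wgm_weight f)))).
    { eapply vle_trans; [|apply (wgm_term_shift f th g eta Hgth)].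
      apply vmin_list_le; [apply wgm_term_rho, admissible_one | |apply in_map, Hg].
      intros w Hw. apply in_map_iff in Hw. destruct Hw as [th' [<- Hth']].
      apply wgm_term_rho; auto. }
    apply (vle_add _ _ _ _ (vopp (vrscal eta (wgm_weight f)))) in Hmin.
    replace (wgm_term f th) with (vadd (vadd (wgm_term f th) (vrscal eta (wgm_weight f)))
      (vopp (vrscal eta (wgm_weight f)))) by v_linear [wgm_term f th; wgm_weight f].
    exact Hmin.
Qed.

Lemma is_wgm_const (a : Vc K D) : is_wgm n (fun _ => a) r (vabs a).
Proof.
  assert (Hterm : forall th, wgm_term (fun _ => a) th = vrscal (sumR n (fun k => r k * th k)) (vabs a))
    by (intros th; unfold wgm_term; apply sumV_rscall).
  split; [|split].
  - apply vpos_rho, vpos_abs, HD.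
  - intros s Hs'. apply wgm_set_iff in Hs'. destruct Hs' as [th [Hth ->]].
    rewrite Hterm, <- (vrscal1 _ _ (vabs a)) at 1.
    apply vle_rscall; [apply admissible_wmean_ge1; auto | apply vpos_abs, HD].
  - intros y Hy Hlb. replace (vabs a) with (wgm_term (fun _ => a) (fun _ => 1)).
    + apply Hlb, wgm_set_iff. exists (fun _ => 1). split; [apply admissible_one | reflexivity].
    + rewrite Hterm, (sumR_ext n _ r), Hs, vrscal1 by (intros; ring). reflexivity.
Qed.

End Space.

Section Maps.
Context {E F : RVL} {G : Vc K E -> Prop} {T : Vc K E -> Vc K F}.
Hypothesis HG : sublattice G.
Hypothesis HT : Klinear_on G T.

Lemma sublattice_wgm_term f th : (forall k, (k < n)%nat -> G (f k)) -> G (wgm_term f th).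
Proof.
  intros Hf. apply (sublattice_sumV HG). intros k Hk.
  apply (sublattice_rscal HG), HG, Hf, Hk.
Qed.

Lemma Klinear_on_wgm_term f th : (forall k, (k < n)%nat -> G (vabs (f k))) ->
  T (wgm_term f th) = sumV n (fun k => vrscal (r k * th k) (T (vabs (f k)))).
Proof.
  intros Hf. unfold wgm_term. rewrite (Klinear_on_sumV HG HT).
  - apply sumV_ext. intros k Hk. apply (Klinear_on_rscal HT), Hf, Hk.
  - intros k Hk. apply (sublattice_rscal HG), Hf, Hk.
Qed.

Hypothesis HH : vl_hom_on G T.

Lemma vl_hom_on_wgm_term f th : (forall k, (k < n)%nat -> G (f k)) ->
  T (wgm_term f th) = wgm_term (fun k => T (f k)) th.
Proof.
  intros Hf. rewrite Klinear_on_wgm_term by (intros k Hk; apply HG, Hf, Hk).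
  apply sumV_ext. intros k Hk. rewrite HH; auto.
Qed.

Lemma vl_hom_on_wgm_term_min f L : (forall k, (k < n)%nat -> G (f k)) ->
  T (wgm_term_min f L) = wgm_term_min (fun k => T (f k)) L.
Proof.
  intros Hf. unfold wgm_term_min, wgm_weight.
  rewrite (vl_hom_on_vmin_list HG HT HH), map_map, vl_hom_on_wgm_term; auto.
  - f_equal. apply map_ext. intros th. apply vl_hom_on_wgm_term, Hf.
  - apply sublattice_wgm_term, Hf.
  - intros w Hw. apply in_map_iff in Hw. destruct Hw as [th [<- _]].
    apply sublattice_wgm_term, Hf.
Qed.

End Maps.

Section Proposition.
Variables E F : RVL.
Hypothesis HE : KVL_ok K E.
Hypothesis HF : KVL_ok K F.

Lemma vl_hom_on_wgm (G : Vc K E -> Prop) (T : Vc K E -> Vc K F) :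
  sublattice G -> Klinear_on G T -> vl_hom_on G T ->
  forall f : nat -> Vc K E, (forall k, (k < n)%nat -> G (f k)) ->
  forall x, is_wgm n f r x -> G x ->
  forall y, is_wgm n (fun k => T (f k)) r y -> T x = y.
Proof.
  intros HG HT HH f Hf x Hx HGx y Hy.
  pose proof (vl_hom_on_mono HG HT HH) as Hmono.
  assert (HTx : vle (T x) y).
  { apply (is_wgm_ge _ _ _ Hy).
    - apply vpos_rho. unfold vpos. rewrite HH, (is_wgm_pos HE _ _ Hx); auto.
    - intros th Hth. rewrite <- (vl_hom_on_wgm_term HG HT HH) by exact Hf.
      apply Hmono; [exact HGx | apply (sublattice_wgm_term HG), Hf | apply (is_wgm_le _ _ _ Hx Hth)]. }
  apply (vle_eq_of_approx _ _ _ _ (T (wgm_weight f)) HTx). intros eta Heta.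
  destruct (is_wgm_approx HE _ _ _ Hx Heta) as [L [HL Happrox]].
  assert (HGw : G (wgm_weight f)) by apply (sublattice_wgm_term HG), Hf.
  assert (HGmin : G (wgm_term_min f L)).
  { apply (sublattice_vmin_list HG); [exact HGw|].
    intros w Hw. apply in_map_iff in Hw. destruct Hw as [th [<- _]].
    apply (sublattice_wgm_term HG), Hf. }
  assert (Hymin : vle y (T (wgm_term_min f L))).
  { rewrite (vl_hom_on_wgm_term_min HG HT HH) by exact Hf. apply (is_wgm_le_term_min HF); auto. }
  assert (HGew : G (vrscal eta (wgm_weight f))) by apply (sublattice_rscal HG), HGw.
  apply Hmono in Happrox; [| apply (sublattice_sub HG); assumption | exact HGx].
  rewrite (Klinear_on_sub HG HT), (Klinear_on_rscal HT) in Happrox by assumption.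
  eapply vle_trans; [exact Hymin|].
  replace (T (wgm_term_min f L)) with (vadd (vsub (T (wgm_term_min f L))
    (vrscal eta (T (wgm_weight f)))) (vrscal eta (T (wgm_weight f))))
    by v_linear [T (wgm_term_min f L); T (wgm_weight f)].
  apply vle_add, Happrox.
Qed.

Lemma positive_map_wgm (T : Vc K E -> Vc K F) : Klinear T -> positive_map T ->
  forall f x y, is_wgm n f r x -> is_wgm n (fun k => T (vabs (f k))) r y -> vle (T x) y.
Proof.
  intros HT HP f x y Hx Hy.
  pose proof (Klinear_on_full HT) as HT'.
  assert (Hmono : forall a b, vle a b -> vle (T a) (T b)).
  { unfold vle. intros a b Hab. rewrite <- (Klinear_on_sub sublattice_full HT'); auto. }
  apply (is_wgm_ge _ _ _ Hy).
  - apply vpos_rho, HP, (is_wgm_pos HE _ _ Hx).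
  - intros th Hth. replace (wgm_term (fun k => T (vabs (f k))) th) with (T (wgm_term f th)).
    + apply Hmono, (is_wgm_le _ _ _ Hx Hth).
    + rewrite (Klinear_on_wgm_term sublattice_full HT') by trivial.
      apply sumV_ext. intros k Hk. rewrite (HP _ (vpos_abs _ _ _ HE)). reflexivity.
Qed.

Lemma vl_hom_iff_wgm (T : Vc K E -> Vc K F) : Klinear T ->
  (vl_hom T <-> forall f x y, is_wgm n f r x -> is_wgm n (fun k => T (f k)) r y -> T x = y).
Proof.
  intros HT. split.
  - intros HH f x y Hx. apply (vl_hom_on_wgm (fun _ => True)); auto.
    + apply sublattice_full.
    + apply Klinear_on_full, HT.
    + intros a _. apply HH.
  - intros H a. symmetry. apply (H (fun _ => a)); apply is_wgm_const; auto.
Qed.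

End Proposition.
End WeightedGeometricMean.

Theorem proposition4p1 (K : Kfield) (E F : RVL) (n : nat) (r : nat -> R) :
  KVL_ok K E -> KVL_ok K F -> wgm_closed K E -> wgm_closed K F ->
  (forall k, (k < n)%nat -> 0 < r k < 1) -> sumR n r = 1 ->
  (* (1) *)
  (forall T : Vc K E -> Vc K F, Klinear T -> positive_map T ->
     forall (f : nat -> Vc K E) (x : Vc K E) (y : Vc K F),
       is_wgm n f r x -> is_wgm n (fun k => T (vabs (f k))) r y -> vle (T x) y) /\
  (* (2) *)
  (forall T : Vc K E -> Vc K F, Klinear T ->
     (vl_hom T <->
      forall (f : nat -> Vc K E) (x : Vc K E) (y : Vc K F),
        is_wgm n f r x -> is_wgm n (fun k => T (f k)) r y -> T x = y)) /\
  (* (3) *)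
  (forall (G : Vc K E -> Prop) (T : Vc K E -> Vc K F),
     sublattice G -> Klinear_on G T -> vl_hom_on G T ->
     forall (f : nat -> Vc K E), (forall k, (k < n)%nat -> G (f k)) ->
     forall x : Vc K E, is_wgm n f r x -> G x ->
     forall y : Vc K F, is_wgm n (fun k => T (f k)) r y -> T x = y).
Proof.
  intros HE HF _ _ Hr Hs.
  assert (Hr0 : forall k, (k < n)%nat -> 0 < r k) by (intros k Hk; apply Hr, Hk).
  split; [|split].
  - exact (positive_map_wgm K n r Hr0 E F HE).
  - exact (vl_hom_iff_wgm K n r Hr0 Hs E F HE HF).
  - exact (vl_hom_on_wgm K n r Hr0 Hs E F HE HF).
Qed.
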